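(* Let $S^*\subset(0,\infty)$ be an open set that is additive (i.e. $a,b\in S^*\Rightarrow a+b\in S^*$), and let $S=[0,\infty)\setminus S^*$ (a closed set). Then $S$ is bounded; let $L=\sup S$. For $x\in[0,L]$ define $a(x)=\sup\{y\in\partial S: y\le x\}$, $b(x)=\inf\{y\in\partial S: y\ge x\}$, $\alpha(x)=x-a(x)$ and $\beta(x)=b(x)-x$, where $\partial S$ is the boundary of $S$ in $\mathbb{R}$. Then: (a) for every $s\in S$, $\alpha(s)\in S$ and $\beta(s)\in S$; (b) if $s^*\in S^*$ and $x\in[0,L]$ are such that both $x$ and $s^*+x$ lie in $[0,L]$ and in the interior of $S$, then $\alpha(s^*+x)<\alpha(x)$ and $\beta(s^*+x)<\beta(x)$; (c) if $s^*\in S^*$ and $x\in[0,L]$ are such that both $x$ and $s^*+x$ lie in $[0,L]\cap S^*$, then $\alpha(s^*+x)>\alpha(x)$ and $\beta(s^*+x)>\beta(x)$.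
   Context: For $x\in S^*\cap[0,L]$, $(a(x),b(x))$ is the maximal interval of $S^*$ containing $x$; for $x$ in the interior of $S$, $(a(x),b(x))$ is the maximal interval of the interior of $S$ containing $x$; for $x\in\partial S$, $a(x)=b(x)=x$. The boundedness of $S$ is a known consequence of the hypotheses. *)

From HB Require Import structures.
From mathcomp Require Import all_boot all_order all_algebra.
From mathcomp Require Import all_classical all_reals all_analysis.
Set Implicit Arguments. Unset Strict Implicit. Unset Printing Implicit Defensive.
Import Order.TTheory GRing.Theory Num.Theory.
Import numFieldNormedType.Exports.
Local Open Scope classical_set_scope.
Local Open Scope ring_scope.

Section Defs.
Variable R : realType.

Definition Scompl (Sstar : set R) : set R := [set x | 0 <= x /\ ~ Sstar x].

Definition boundary (A : set R) : set R := closure A `\` interior A.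

Definition a_fun (S : set R) (x : R) : R := sup [set y | boundary S y /\ y <= x].
Definition b_fun (S : set R) (x : R) : R := inf [set y | boundary S y /\ x <= y].
Definition alpha (S : set R) (x : R) : R := x - a_fun S x.
Definition beta (S : set R) (x : R) : R := b_fun S x - x.

End Defs.

From HB Require Import structures.
From mathcomp Require Import all_boot all_order all_algebra.
From mathcomp Require Import all_classical all_reals all_analysis.
From mathcomp Require Import ring lra.
Import Order.TTheory GRing.Theory Num.Theory.
Import numFieldNormedType.Exports.
Local Open Scope classical_set_scope.
Local Open Scope ring_scope.
Set Implicit Arguments. Unset Strict Implicit. Unset Printing Implicit Defensive.

(** The crux is that adding an element of S* to a point of the boundary of S
    lands in S* (a boundary point is approximated by points of S*, and S* is
    open and additive).  Since a(x) and b(x) are boundary points, the shifted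
    points a(x) + s* and b(x) + s* lie in S*, whereas on the whole interval
    (a(x), b(x)) the set S is either present throughout or absent throughout
    (any change would produce a boundary point in between).  Comparing the
    shifted points with the interval around s* + x gives the inequalities. *)

Section RealBoundary.
Variable R : realType.
Implicit Types A : set R.

Lemma boundaryC A : boundary (~` A) = boundary A.
Proof. by rewrite /boundary closure_setC interiorC setDE setCK setIC -setDE. Qed.

Lemma closed_boundary A : closed (boundary A).
Proof.
rewrite /boundary setDE; apply: closedI; first exact: closed_closure.
exact/open_closedC/open_interior.
Qed.

Lemma closed_boundary_sub A : closed A -> boundary A `<=` A.
Proof. by move=> cA y [Ay _]; rewrite (closure_id A).1. Qed.

Lemma closed_sup_mem A y : closed A -> A y -> has_ubound A -> A (sup A).
Proof.
move=> cA Ay ubA; have := closure_sup (ex_intro _ y Ay) ubA.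
by rewrite -(closure_id A).1.
Qed.

Lemma closed_inf_mem A y : closed A -> A y -> has_lbound A -> A (inf A).
Proof.
move=> cA Ay lbA; apply: contrapT => nA.
have /nbhs_ballP[e e0 ballA] : nbhs (inf A) (~` A).
  by move: (closed_openC cA); rewrite openE; apply.
have [w Aw winf] := inf_adherent e0 (conj (ex_intro _ y Ay) lbA).
apply: (ballA w) => //; have := ge_inf lbA Aw.
by rewrite /ball /= ltr_distl; lra.
Qed.

Lemma interior_normP A x :
  interior A x <-> exists2 e : R, 0 < e & forall y, `|x - y| < e -> A y.
Proof.
split; first by move=> /nbhs_ballP[e e0 ballA]; exists e => // y /ballA.
by move=> [e e0 inA]; apply/nbhs_ballP; exists e => // y /inA.
Qed.

(* Witnessed by the supremum of A on [p, q]. *)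
Lemma boundary_between A p q : p <= q -> A p -> ~ A q ->
  exists2 m, p <= m <= q & boundary A m.
Proof.
move=> pq Ap nAq; pose E := A `&` [set w | p <= w <= q].
have Ep : E p by split; rewrite //= lexx.
have ubE : has_ubound E by exists q => w [_ /andP[]].
have pm : p <= sup E := ub_le_sup ubE Ep.
have mq : sup E <= q by apply: ge_sup; [exists p | move=> w [_ /andP[]]].
exists (sup E); first by rewrite pm.
split; first exact: (closureS (@subIsetl _ A _)) (closure_sup (ex_intro _ p Ep) ubE).
move=> /interior_normP[e e0 inA].
have [qe|qe] := leP (sup E + e / 2) q.
- have /(ub_le_sup ubE) : E (sup E + e / 2).
    split; last by apply/andP; split; lra.
    by apply: inA; rewrite opprD addNKr normrN ger0_norm; lra.
  lra.
- by apply/nAq/inA; rewrite ltr_distl; lra.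
Qed.

Lemma boundary_betweenC A p q : p <= q -> ~ A p -> A q ->
  exists2 m, p <= m <= q & boundary A m.
Proof. by move=> pq nAp Aq; rewrite -boundaryC; apply: boundary_between. Qed.

End RealBoundary.

Section BoundaryNeighbours.
Variables (R : realType) (S : set R).
Implicit Types x y z : R.

Let below x := boundary S `&` [set y | y <= x].
Let above x := boundary S `&` [set y | x <= y].

Lemma le_a_fun x y : boundary S y -> y <= x -> y <= a_fun S x.
Proof. by move=> By yx; apply: ub_le_sup; [exists x => ? [] | split]. Qed.

Lemma a_fun_mem x y : boundary S y -> y <= x ->
  boundary S (a_fun S x) /\ a_fun S x <= x.
Proof.
move=> By yx; apply: (@closed_sup_mem _ (below x) y); last by exists x => ? [].
- by apply: closedI; [exact: closed_boundary | exact: closed_le].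
- by split.
Qed.

Lemma b_fun_le x y : boundary S y -> x <= y -> b_fun S x <= y.
Proof. by move=> By xy; apply: ge_inf; [exists x => ? [] | split]. Qed.

Lemma b_fun_mem x y : boundary S y -> x <= y ->
  boundary S (b_fun S x) /\ x <= b_fun S x.
Proof.
move=> By xy; apply: (@closed_inf_mem _ (above x) y); last by exists x => ? [].
- by apply: closedI; [exact: closed_boundary | exact: closed_ge].
- by split.
Qed.

Lemma le_a_fun_in x z : ~ S x -> S z -> z <= x -> z <= a_fun S x.
Proof.
move=> nSx Sz zx; have [m /andP[zm mx] Bm] := boundary_between zx Sz nSx.
by rewrite (le_trans zm) // le_a_fun.
Qed.

Lemma b_fun_le_in x z : ~ S x -> S z -> x <= z -> b_fun S x <= z.
Proof.
move=> nSx Sz xz; have [m /andP[xm mz] Bm] := boundary_betweenC xz nSx Sz.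
by rewrite (le_trans _ mz) // b_fun_le.
Qed.

Hypothesis S_closed : closed S.

Lemma lt_a_fun_notin x z : S x -> ~ S z -> z <= x -> z < a_fun S x.
Proof.
move=> Sx nSz zx; have [m /andP[zm mx] Bm] := boundary_betweenC zx nSz Sx.
have zm' : z != m by apply: contra_notN nSz => /eqP->; apply: closed_boundary_sub.
by rewrite (lt_le_trans _ (le_a_fun Bm mx)) // lt_neqAle zm' zm.
Qed.

Lemma b_fun_lt_notin x z : S x -> ~ S z -> x <= z -> b_fun S x < z.
Proof.
move=> Sx nSz xz; have [m /andP[xm mz] Bm] := boundary_between xz Sx nSz.
have mz' : m != z by apply: contra_notN nSz => /eqP<-; apply: closed_boundary_sub.
by rewrite (le_lt_trans (b_fun_le Bm xm)) // lt_neqAle mz' mz.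
Qed.

End BoundaryNeighbours.

Section Scompl.
Variables (R : realType) (Sstar : set R).
Hypotheses (Sstar_open : open Sstar) (Sstar_pos : Sstar `<=` [set x | 0 < x])
  (Sstar_add : forall u v, Sstar u -> Sstar v -> Sstar (u + v)).
Local Notation S := (Scompl Sstar).

Lemma closed_Scompl : closed S.
Proof. by apply: closedI; [exact: closed_ge | exact: open_closedC]. Qed.

Lemma Sstar_notin_Scompl z : Sstar z -> ~ S z.
Proof. by move=> Sz [_]. Qed.

Lemma Sstar_interior z : Sstar z -> interior Sstar z.
Proof. by move: Sstar_open; rewrite openE; apply. Qed.

Lemma boundary_Scompl0 : boundary S 0.
Proof.
split; first by apply: subset_closure; split => // /Sstar_pos /=; rewrite ltxx.
move=> /interior_normP[e e0 inS]; have [] := inS (- (e / 2)).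
  by rewrite sub0r opprK ger0_norm; lra.
by rewrite oppr_ge0; lra.
Qed.

Lemma boundary_Scompl_sup : has_ubound S -> boundary S (sup S).
Proof.
move=> ubS; have S0 := closed_boundary_sub closed_Scompl boundary_Scompl0.
split; first exact: closure_sup (ex_intro _ 0 S0) ubS.
by move=> /(right_bounded_interior ubS) /=; rewrite ltxx.
Qed.

Lemma closure_Sstar_addr y t : closure Sstar y -> Sstar t -> Sstar (y + t).
Proof.
move=> cly /Sstar_interior/interior_normP[r r0 ballS].
have [z [Sz /= yz]] := cly _ (nbhsx_ballx y r r0).
have -> : y + t = z + (t - (z - y)) by ring.
apply: Sstar_add => //; apply: ballS.
by rewrite opprB addrC subrK distrC.
Qed.

Lemma boundary_Scompl y : boundary S y -> y = 0 \/ closure Sstar y.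
Proof.
move=> By; have [y0 _] := closed_boundary_sub closed_Scompl By.
have : closure (~` S) y by rewrite closure_setC; exact: By.2.
have complS : ~` S `<=` [set x | x < 0] `|` Sstar.
  move=> x nSx; have [x0|x0] := ltP x 0; first by left.
  by right; apply: contrapT => nSx'; apply: nSx.
move=> /(closureS complS); rewrite closureU => -[cly|]; last by right.
left; apply/le_anti; rewrite y0 andbT.
by apply: (@closed_le R 0 y); apply: (closureS _ cly) => x /ltW.
Qed.

Lemma boundary_Scompl_addr y t : boundary S y -> Sstar t -> Sstar (y + t).
Proof.
by move=> /boundary_Scompl[->|cly] St; [rewrite add0r | exact: closure_Sstar_addr].
Qed.

Lemma Scompl_subr w t : Sstar t -> S w -> t <= w -> S (w - t).
Proof.
move=> St [_ nSw] tw; split; first by rewrite subr_ge0.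
by move=> /Sstar_add/(_ St); rewrite subrK.
Qed.

Lemma Sstar_natmul y n : Sstar y -> Sstar (y *+ n.+1).
Proof.
by move=> Sy; elim: n => [|n IHn]; [rewrite mulr1n | rewrite mulrS; apply: Sstar_add].
Qed.

(* The multiples k (s - r, s + r) of a ball inside S* overlap as soon as
   k > s / r, so together they cover a half-line. *)
Lemma has_ubound_Scompl : Sstar !=set0 -> has_ubound S.
Proof.
move=> [s Ss]; have s0 : 0 < s := Sstar_pos Ss.
have /interior_normP[r r0 ballS] := Sstar_interior Ss.
exists (s * (s + r) / r) => x [x0 nSx]; rewrite leNgt; apply/negP => xM.
have sr0 : 0 < s + r by lra.
pose u := x / (s + r); pose n := Num.truncn u; pose k : R := n.+1%:R.
have x_eq : x = u * (s + r) by rewrite divfK ?gt_eqF.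
have /andP[nu uk] : n%:R <= u < k by apply/truncn_itv/divr_ge0/ltW.
have k_eq : k = n%:R + 1 by rewrite /k -natr1.
have ur : s < u * r.
  have xr : s * (s + r) < x * r by rewrite -ltr_pdivrMr.
  by rewrite -(ltr_pM2r sr0) mulrAC -x_eq.
have k0 : 0 < k by rewrite ltr0n.
have Sxk : Sstar (x / k).
  apply: ballS; rewrite ltr_distlC ltr_pdivlMr // ltr_pdivrMr // x_eq.
  by apply/andP; split; [nra | rewrite [_ * k]mulrC ltr_pM2r].
by apply: nSx; have := Sstar_natmul n Sxk; rewrite -mulr_natr divfK ?gt_eqF.
Qed.

Section BoundedScompl.
Hypothesis Scompl_ub : has_ubound S.

Lemma Scompl_a_fun x : 0 <= x -> boundary S (a_fun S x) /\ 0 <= a_fun S x <= x.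
Proof.
move=> x0; have [Ba ax] := a_fun_mem boundary_Scompl0 x0.
by rewrite ax le_a_fun //; exact: boundary_Scompl0.
Qed.

Lemma Scompl_b_fun x : x <= sup S -> boundary S (b_fun S x) /\ x <= b_fun S x.
Proof. exact/b_fun_mem/boundary_Scompl_sup. Qed.

Lemma Scompl_alpha_beta s : S s -> S (alpha S s) /\ S (beta S s).
Proof.
move=> Ss; have [s0 _] := Ss.
have [Ba /andP[_ as_]] := Scompl_a_fun s0.
have [_ sb] := Scompl_b_fun (ub_le_sup Scompl_ub Ss).
rewrite /alpha /beta; split; split; rewrite ?subr_ge0 //.
  by move=> /(boundary_Scompl_addr Ba); rewrite subrKC => /Sstar_notin_Scompl.
move=> Sbeta; have /= beta0 := Sstar_pos Sbeta.
have nS := Sstar_notin_Scompl (boundary_Scompl_addr Ba Sbeta).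
have [le_s|gt_s] := leP (a_fun S s + (b_fun S s - s)) s.
  by have := lt_a_fun_notin closed_Scompl Ss nS le_s; lra.
by have := b_fun_lt_notin closed_Scompl Ss nS (ltW gt_s); lra.
Qed.

Lemma alpha_beta_addr_Scompl t x : Sstar t -> S x -> S (t + x) ->
  alpha S (t + x) < alpha S x /\ beta S (t + x) < beta S x.
Proof.
move=> St Sx Stx; have [x0 _] := Sx.
have [Ba /andP[_ ax]] := Scompl_a_fun x0.
have [Bb xb] := Scompl_b_fun (ub_le_sup Scompl_ub Sx).
have nSa := Sstar_notin_Scompl (boundary_Scompl_addr Ba St).
have nSb := Sstar_notin_Scompl (boundary_Scompl_addr Bb St).
rewrite /alpha /beta; split.
  have : a_fun S x + t < a_fun S (t + x).
    by apply: (lt_a_fun_notin closed_Scompl Stx nSa); lra.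
  lra.
have : b_fun S (t + x) < b_fun S x + t.
  by apply: (b_fun_lt_notin closed_Scompl Stx nSb); lra.
lra.
Qed.

Lemma alpha_beta_addr_Sstar t x : Sstar t -> Sstar x -> t + x <= sup S ->
  alpha S x < alpha S (t + x) /\ beta S x < beta S (t + x).
Proof.
move=> St Sx txL; have Stx := Sstar_add St Sx.
have /= t0 := Sstar_pos St; have /= x0 := Sstar_pos Sx.
have nSx := Sstar_notin_Scompl Sx.
have [Ba /andP[a0 _]] := Scompl_a_fun (ltW x0).
have [BA /andP[_ aA]] := Scompl_a_fun (ltW (Sstar_pos Stx)).
have [Bb _] : boundary S (b_fun S x) /\ x <= b_fun S x.
  by apply: Scompl_b_fun; lra.
have [BB tb] := Scompl_b_fun txL.
have SA := closed_boundary_sub closed_Scompl BA.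
have SB := closed_boundary_sub closed_Scompl BB.
have neqA : a_fun S (t + x) != a_fun S x + t.
  by apply: contra_notN (Sstar_notin_Scompl (boundary_Scompl_addr Ba St)) => /eqP<-.
have neqB : b_fun S x + t != b_fun S (t + x).
  by apply: contra_notN (Sstar_notin_Scompl (boundary_Scompl_addr Bb St)) => /eqP->.
rewrite /alpha /beta; split.
  suff : a_fun S (t + x) < a_fun S x + t by lra.
  rewrite lt_neqAle neqA /=; have [ta|lt_t] := leP t (a_fun S (t + x)); last by lra.
  have : a_fun S (t + x) - t <= a_fun S x.
    by apply: (le_a_fun_in nSx (Scompl_subr St SA ta)); lra.
  lra.
suff : b_fun S x + t < b_fun S (t + x) by lra.
rewrite lt_neqAle neqB /=.
have : b_fun S x <= b_fun S (t + x) - t.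
  by apply: (b_fun_le_in nSx (Scompl_subr St SB _)); lra.
lra.
Qed.

End BoundedScompl.

End Scompl.

Theorem lemma3 (R : realType) (Sstar : set R)
  (Sstar_open : open Sstar)
  (Sstar_pos : Sstar `<=` [set x | 0 < x])
  (Sstar_add : forall u v, Sstar u -> Sstar v -> Sstar (u + v))
  (Sstar_nonempty : Sstar !=set0) :
  let S := Scompl Sstar in
  let L := sup S in
  has_ubound S /\
  (* (a) *)
  (forall s, S s -> S (alpha S s) /\ S (beta S s)) /\
  (* (b) *)
  (forall sstar x, Sstar sstar ->
     0 <= x <= L -> 0 <= sstar + x <= L ->
     interior S x -> interior S (sstar + x) ->
     alpha S (sstar + x) < alpha S x /\ beta S (sstar + x) < beta S x) /\
  (* (c) *)
  (forall sstar x, Sstar sstar ->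
     0 <= x <= L -> 0 <= sstar + x <= L ->
     Sstar x -> Sstar (sstar + x) ->
     alpha S x < alpha S (sstar + x) /\ beta S x < beta S (sstar + x)).
Proof.
move=> S L.
have ubS : has_ubound S := has_ubound_Scompl Sstar_open Sstar_pos Sstar_add Sstar_nonempty.
split; first exact: ubS.
split; first exact: Scompl_alpha_beta.
split.
  move=> t x St _ _ /interior_subset Sx /interior_subset Stx.
  exact: alpha_beta_addr_Scompl.
by move=> t x St _ /andP[_ txL] Sx _; apply: alpha_beta_addr_Sstar.
Qed.
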